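(* Let $k>1$ be an integer with $k\in\mathcal C_1$. Then $$2^k-1<a_k<2^{k+1}-1.$$ In particular $c_k/2^k\to0$ as $k\to\infty$ through $\mathcal C_1$. Furthermore, let $t_k$ be the multiplicative order of $2$ modulo $k$ and let $j_0\in\{0,1,\ldots,t_k-1\}$ be the (unique) integer with $2^{k+1}-1\equiv 2^{j_0}\pmod k$; put $s=\lfloor (k-1-j_0)/t_k\rfloor$ and $j_1=j_0+st_k$. Then $$a_k=2^{k+1}-1-2^{j_1}.$$
   Context: For a positive integer $k$, $a_k$ is the smallest positive multiple of $k$ whose sum of binary digits equals $k$, and $c_k=a_k/k$. For a positive integer $m$, $\mathcal C_m$ is the set of odd positive integers $k$ for which there exist integers $0\le j_1<j_2<\cdots<j_m\le m+k-2$ with $2^{k+m}-1\equiv \sum_{i=1}^m 2^{j_i}\pmod k$. *)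

From HB Require Import structures.
From mathcomp Require Import all_boot all_order all_algebra.
Set Implicit Arguments. Unset Strict Implicit. Unset Printing Implicit Defensive.
Import Order.TTheory GRing.Theory Num.Theory.

(* Sum of binary digits of n: bit i of n is odd (n %/ 2^i); bits i >= n vanish
   since n < 2^n. *)
Definition binsum (n : nat) : nat := \sum_(i < n) odd (n %/ 2 ^ i).

Definition is_a (k a : nat) : Prop :=
  [/\ 0 < a, k %| a, binsum a = k &
      forall b, 0 < b -> k %| b -> binsum b = k -> a <= b].

Definition inC (m k : nat) : Prop :=
  [/\ odd k, 0 < k &
      exists j : seq nat,
        [/\ size j = m, sorted ltn j, all (fun x => x <= m + k - 2) j &
            2 ^ (k + m) - 1 = \sum_(x <- j) 2 ^ x %[mod k]]].

Definition is_order2 (k t : nat) : Prop :=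
  [/\ 0 < t, 2 ^ t = 1 %[mod k] &
      forall u, 0 < u -> 2 ^ u = 1 %[mod k] -> t <= u].

(* Write allbut k j := 2^(k+1) - 1 - 2^j, the number whose binary digits
   0..k are all one except digit j.  The proof has three ingredients.
   1. Binary digit sums: a number with k ones is at least 2^k - 1, and the
      numbers below 2^(k+1) with k ones are exactly the allbut k j, j <= k.
   2. Powers of 2 modulo an odd k: an odd k > 1 never divides 2^k - 1, and
      exponents of congruent powers of 2 agree modulo the order t of 2.
   3. allbut k j is divisible by k iff 2^(k+1) - 1 = 2^j (mod k); for k in
      C_1 some j < k qualifies, giving a_k <= allbut k j < 2^(k+1) - 1, while
      1 and 2 exclude a_k <= 2^k - 1.  Among the candidates allbut k i the
      least has the largest admissible i, which is i = j0 (mod t) and i < k,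
      namely j1 = j0 + floor((k-1-j0)/t) t.
   The decay of c_k / 2^k follows from a_k < 2^(k+1). *)

From HB Require Import structures.
From mathcomp Require Import all_boot all_order all_algebra zify.
Import Order.TTheory GRing.Theory Num.Theory.
Set Implicit Arguments. Unset Strict Implicit.

Definition bitsum (m n : nat) : nat := \sum_(i < m) odd (n %/ 2 ^ i).

Lemma bitsumS m n : bitsum m.+1 n = odd n + bitsum m n./2.
Proof.
rewrite /bitsum big_ord_recl /= expn0 divn1; congr (_ + _).
by apply: eq_bigr => i _; rewrite /bump /= add1n expnS divnMA divn2.
Qed.

Lemma bitsum0 m : bitsum m 0 = 0.
Proof. by rewrite /bitsum big1 // => i _; rewrite div0n. Qed.

Lemma half_lt_pow m n : n < 2 ^ m.+1 -> n./2 < 2 ^ m.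
Proof. by rewrite -{1}(odd_double_half n) expnS -mul2n; lia. Qed.

Lemma bitsum_widen m d n : n < 2 ^ m -> bitsum (m + d) n = bitsum m n.
Proof.
move=> Hn; elim: d => [|d IH]; first by rewrite addn0.
rewrite addnS /bitsum big_ord_recr /= -/(bitsum _ _) IH divn_small ?addn0 //.
by apply: leq_trans Hn _; rewrite leq_pexp2l // leq_addr.
Qed.

Lemma binsumE m n : n < 2 ^ m -> binsum n = bitsum m n.
Proof.
move=> Hm; rewrite /binsum -/(bitsum n n).
case: (leqP m n) => H; first by rewrite -(bitsum_widen (n - m) Hm) subnKC.
by rewrite -(bitsum_widen (m - n) (ltn_expl n (ltnSn 1))) subnKC // ltnW.
Qed.

Lemma bitsum_pow_le m n : 2 ^ bitsum m n <= n.+1.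
Proof.
elim: m n => [|m IH] n; first by rewrite /bitsum big_ord0.
rewrite bitsumS expnD; have := IH n./2; have := odd_double_half n.
by case: (odd n); rewrite -mul2n /=; lia.
Qed.

Lemma bitsum_eq0 m n : n < 2 ^ m -> bitsum m n = 0 -> n = 0.
Proof.
elim: m n => [|m IH] n; first by rewrite expn0 ltnS leqn0 => /eqP.
move=> /half_lt_pow /IH {}IH; rewrite bitsumS -{3}(odd_double_half n).
by case: (odd n) => //= /IH ->.
Qed.

Lemma bitsum_eq1 m n : n < 2 ^ m -> bitsum m n = 1 -> exists j, n = 2 ^ j.
Proof.
elim: m n => [|m IH] n; first by rewrite /bitsum big_ord0.
move=> Hn; have Hh := half_lt_pow Hn; rewrite bitsumS -{3}(odd_double_half n).
case: (odd n) => /= [[/(bitsum_eq0 Hh) ->]|/(IH _ Hh) [j ->]]; first by exists 0.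
by exists j.+1; rewrite expnS -mul2n.
Qed.

Lemma bitsum_pow m j : j < m -> bitsum m (2 ^ j) = 1.
Proof.
elim: m j => [|m IH] [|j] //= H; first by rewrite bitsumS expn0 /= bitsum0.
by rewrite bitsumS expnS oddM /= mul2n doubleK IH.
Qed.

(* Complementation 2^m - 1 - n flips all m digits of n. *)
Lemma bitsum_compl m n : n < 2 ^ m -> bitsum m (2 ^ m - 1 - n) + bitsum m n = m.
Proof.
elim: m n => [|m IH] n Hn.
  by move: Hn; rewrite expn0 ltnS leqn0 => /eqP ->; rewrite bitsum0.
have := IH _ (half_lt_pow Hn); rewrite !bitsumS.
have -> : 2 ^ m.+1 - 1 - n = ~~ odd n + (2 ^ m - 1 - n./2).*2.
  move: Hn (odd_double_half n); rewrite expnS -!mul2n.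
  by case: (odd n) => /=; lia.
rewrite half_bit_double oddD odd_double addbF oddb.
by case: (odd n) => /=; lia.
Qed.

(* The number 2^(k+1) - 1 - 2^j: digits 0..k are all one except digit j. *)
Definition allbut (k j : nat) : nat := 2 ^ k.+1 - 1 - 2 ^ j.

Lemma binsum_pow_le b : 2 ^ binsum b <= b.+1.
Proof. exact: bitsum_pow_le. Qed.

Lemma binsum_allbut k j : j <= k -> binsum (allbut k j) = k.
Proof.
move=> Hj; have Hjk : 2 ^ j < 2 ^ k.+1 by rewrite ltn_exp2l.
rewrite /allbut (binsumE (m := k.+1)); last by have := expn_gt0 2 j; lia.
by have := bitsum_compl Hjk; rewrite bitsum_pow //; lia.
Qed.

Lemma binsum_eq_below k b : b < 2 ^ k.+1 -> binsum b = k ->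
  exists2 i, i <= k & b = allbut k i.
Proof.
move=> Hb; rewrite (binsumE Hb) => Hs.
have Hc := bitsum_compl Hb; rewrite Hs in Hc.
have Hw : bitsum k.+1 (2 ^ k.+1 - 1 - b) = 1 by lia.
have Hlt : 2 ^ k.+1 - 1 - b < 2 ^ k.+1 by have := expn_gt0 2 k.+1; lia.
have [i Hi] := bitsum_eq1 Hlt Hw.
by exists i; [rewrite -ltnS -(ltn_exp2l _ _ (ltnSn 1)) -Hi | rewrite /allbut -Hi]; lia.
Qed.

Lemma modn_cancell k a y z : coprime k a -> a * y = a * z %[mod k] -> y = z %[mod k].
Proof.
move=> Hc; wlog Hzy : y z / z <= y => [W|].
  by case: (leqP z y) => [|/ltnW] H E; [exact: W | apply/esym/W/esym].
move=> /eqP; rewrite eqn_mod_dvd ?leq_mul2l ?Hzy ?orbT // -mulnBr Gauss_dvdr //.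
by rewrite -eqn_mod_dvd // => /eqP.
Qed.

Section PowersMod.
Variables (k x : nat).

Lemma expn_mod_shift t y q : x ^ t = 1 %[mod k] -> x ^ (y + q * t) = x ^ y %[mod k].
Proof.
move=> Ht; rewrite expnD (mulnC q) expnM -modnMmr -modnXm Ht.
by rewrite modnXm exp1n modnMmr muln1.
Qed.

Lemma expn_mod1_gcd a b : 0 < a -> x ^ a = 1 %[mod k] -> x ^ b = 1 %[mod k] ->
  x ^ gcdn a b = 1 %[mod k].
Proof.
move=> Ha Hxa Hxb; have [u _ /dvdnP [v Hv]] := Bezoutl b Ha.
have := expn_mod_shift (gcdn a b) u Hxb.
by rewrite Hv -[v * a]add0n expn_mod_shift // expn0 => <-.
Qed.

Lemma expn_mod_sub i j : coprime k x -> j <= i -> x ^ i = x ^ j %[mod k] ->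
  x ^ (i - j) = 1 %[mod k].
Proof.
move=> Hc Hji E; apply: (@modn_cancell k (x ^ j)); first exact: coprimeXr.
by rewrite muln1 -expnD subnKC.
Qed.

End PowersMod.

Lemma order2_dvd k t u : is_order2 k t -> 2 ^ u = 1 %[mod k] -> t %| u.
Proof.
case=> t0 Ht Hmin Hu; case: (posnP u) => [->|u0]; first exact: dvdn0.
have g0 : 0 < gcdn t u by rewrite gcdn_gt0 t0.
have Htg : t <= gcdn t u by apply: Hmin g0 (expn_mod1_gcd t0 Ht Hu).
have -> : t = gcdn t u by apply/eqP; rewrite eqn_leq Htg dvdn_leq ?dvdn_gcdl.
exact: dvdn_gcdr.
Qed.

Lemma order2_exp_congr k t i j : odd k -> is_order2 k t ->
  2 ^ i = 2 ^ j %[mod k] -> i = j %[mod t].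
Proof.
move=> Hk Ht; wlog Hji : i j / j <= i => [W|].
  by case: (leqP j i) => [|/ltnW] H E; [exact: W | apply/esym/W/esym].
move=> /(expn_mod_sub _ Hji); rewrite coprimen2 Hk => /(_ isT) /(order2_dvd Ht).
by rewrite -eqn_mod_dvd // => /eqP.
Qed.

(* An odd k > 1 never divides 2^k - 1: for p the least prime factor of k,
   2^k = 2^(p-1) = 1 (mod p) and gcd(p-1, k) = 1 would give 2 = 1 (mod p). *)
Lemma odd_ndvd_pow2_pred k : odd k -> 1 < k -> ~~ (k %| 2 ^ k - 1).
Proof.
move=> Hodd Hk; apply/negP => Hdvd; set p := pdiv k.
have p_pr : prime p by apply: pdiv_prime.
have p_k : p %| k by apply: pdiv_dvd.
have p_gt2 : 2 < p.
  rewrite ltn_neqAle prime_gt1 // andbT; apply: contraTneq p_k => <-.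
  by rewrite dvdn2 Hodd.
have p_cop : coprime p 2 by rewrite prime_coprime // dvdn_prime2 // gtn_eqF.
have Hk1 : 2 ^ k = 1 %[mod p].
  by apply/eqP; rewrite eqn_mod_dvd ?expn_gt0 //; apply: dvdn_trans p_k Hdvd.
have Hp1 : 2 ^ p.-1 = 1 %[mod p].
  apply: (modn_cancell p_cop); rewrite muln1 -expnS prednK ?prime_gt0 //.
  exact: fermat_little.
have p1_gt0 : 0 < p.-1 by rewrite -ltnS prednK ?prime_gt0 ?prime_gt1.
have Hg := expn_mod1_gcd p1_gt0 Hp1 Hk1.
have g1 : gcdn p.-1 k = 1.
  apply/eqP; rewrite eqn_leq gcdn_gt0 p1_gt0 andbT leqNgt; apply/negP => g_gt1.
  have := pdiv_min_dvd g_gt1 (dvdn_gcdr p.-1 k).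
  have := dvdn_leq p1_gt0 (dvdn_gcdl p.-1 k); rewrite -/p; lia.
by move: Hg; rewrite g1 expn1 !modn_small // ltnW.
Qed.

Lemma allbut_lt k j : 0 < k -> j <= k -> 2 ^ k - 1 <= allbut k j < 2 ^ k.+1 - 1.
Proof.
move=> k0 Hjk; have := leq_pexp2l (isT : 0 < 2) Hjk; have := expn_gt0 2 j.
by rewrite /allbut expnS; lia.
Qed.

Lemma dvdn_allbut k i : i <= k -> (k %| allbut k i) = (2 ^ k.+1 - 1 == 2 ^ i %[mod k]).
Proof.
move=> Hik; rewrite /allbut eqn_mod_dvd //.
by have := leq_pexp2l (isT : 0 < 2) Hik; have := expn_gt0 2 k; rewrite expnS; lia.
Qed.

Lemma residue_le_last n t j0 i : i %% t = j0 -> i <= n -> i <= j0 + (n - j0) %/ t * t.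
Proof.
move=> Hi Hin; have Ei := divn_eq i t; rewrite Hi in Ei.
case: (posnP t) => [t0|t_gt0]; first by move: Hi; rewrite t0 modn0; lia.
have : i %/ t <= (n - j0) %/ t by rewrite leq_divRL //; lia.
by move/(leq_mul (leqnn t)); rewrite ![t * _]mulnC; lia.
Qed.

Lemma inC1_witness k : inC 1 k -> exists2 j, j < k & 2 ^ k.+1 - 1 = 2 ^ j %[mod k].
Proof.
case=> _ k0 [[|j [|? ?]] [//= _ _ /andP [Hj _]]].
by rewrite big_seq1 addn1 => Hm; exists j => //; lia.
Qed.

Lemma allbut_weight_multiple k j : 0 < k -> j <= k -> 2 ^ k.+1 - 1 = 2 ^ j %[mod k] ->
  [/\ 0 < allbut k j, k %| allbut k j & binsum (allbut k j) = k].
Proof.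
move=> k0 Hjk Hm; have /andP [Hlo _] := allbut_lt k0 Hjk.
split; last exact: binsum_allbut.
- by apply: leq_trans Hlo; have := ltn_expl k (ltnSn 1); lia.
- by rewrite dvdn_allbut // Hm.
Qed.

(* For odd k > 1, a multiple of k below 2^(k+1) with k ones is allbut k i
   with i < k: the case i = k is 2^k - 1, which k does not divide. *)
Lemma weight_multiple_below k b : odd k -> 1 < k -> k %| b -> binsum b = k ->
  b < 2 ^ k.+1 -> exists2 i, i < k & b = allbut k i.
Proof.
move=> Hodd Hk Hkb Hb Hlt; have [i Hik Ei] := binsum_eq_below Hlt Hb.
exists i => //; rewrite ltn_neqAle Hik andbT; apply: contraTneq Hkb => Eik.
have -> : b = 2 ^ k - 1 by rewrite Ei Eik /allbut expnS; lia.
exact: odd_ndvd_pow2_pred.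
Qed.

Lemma a_bounds k a : 1 < k -> inC 1 k -> is_a k a -> 2 ^ k - 1 < a < 2 ^ k.+1 - 1.
Proof.
move=> Hk HC [a0 Hka Hwa Hmin]; have [Hodd k0 _] := HC.
have [j /ltnW Hjk Hm] := inC1_witness HC.
have [c0 cd cw] := allbut_weight_multiple k0 Hjk Hm.
have /andP [_ Hup] := allbut_lt k0 Hjk.
have Hlo := binsum_pow_le a; rewrite Hwa in Hlo.
have Hne : a != 2 ^ k - 1 by apply: contraNneq (odd_ndvd_pow2_pred Hodd Hk) => <-.
by apply/andP; split; [lia | exact: leq_ltn_trans (Hmin _ c0 cd cw) Hup].
Qed.

(* Second claim: a_k = allbut k j1 where j1 is the largest i <= k - 1 with
   i = j0 (mod t); smaller candidates allbut k i need a larger admissible i. *)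
Lemma a_formula k t j0 : 1 < k -> inC 1 k -> is_order2 k t -> j0 < t ->
  2 ^ k.+1 - 1 = 2 ^ j0 %[mod k] -> is_a k (allbut k (j0 + (k - 1 - j0) %/ t * t)).
Proof.
move=> Hk HC Ht Hj0 H0; have [Hodd k0 _] := HC; have [_ Ht1 _] := Ht.
have residue i : 2 ^ k.+1 - 1 = 2 ^ i %[mod k] -> i %% t = j0.
  by move=> Hi; rewrite -(modn_small Hj0); apply: order2_exp_congr Hodd Ht _; rewrite -Hi.
have [j Hjk /residue Hj] := inC1_witness HC.
have Hj1 : j0 + (k - 1 - j0) %/ t * t <= k - 1.
  have := leq_trunc_div (k - 1 - j0) t; have := leq_mod j t.
  move: ((k - 1 - j0) %/ t * t) => q; lia.
set j1 := j0 + _ * t in Hj1 *.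
have Hm1 : 2 ^ k.+1 - 1 = 2 ^ j1 %[mod k] by rewrite H0 expn_mod_shift.
have Hj1k : j1 <= k by apply: leq_trans Hj1 (leq_subr 1 k).
have [c0 cd cw] := allbut_weight_multiple k0 Hj1k Hm1.
split => // b b0 bd bw; have /andP [_ Hup] := allbut_lt k0 Hj1k.
case: (leqP (2 ^ k.+1) b) => Hb.
  by apply: ltnW; apply: leq_trans Hup (leq_trans (leq_subr 1 _) Hb).
have [i Hik Ei] := weight_multiple_below Hodd Hk bd bw Hb.
have Hij1 : i <= j1.
  apply: residue_le_last; last by rewrite -ltnS subn1 prednK.
  by apply: residue; apply/eqP; rewrite -dvdn_allbut -?Ei // ltnW.
by rewrite Ei /allbut leq_sub2l // leq_pexp2l.
Qed.

(* a < 2^(k+1) forces (a/k)/2^k < 2/k, which tends to 0 (Archimedean). *)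
Lemma ratio_vanishes (R : archiFieldType) (eps : R) : (0 < eps)%R ->
  exists N : nat, forall k a : nat, N <= k -> 0 < k -> a < 2 ^ k.+1 ->
    ((a%:R / k%:R) / (2 ^ k)%:R < eps)%R.
Proof.
move=> eps0; exists (Num.bound (2 / eps)%R).+1 => k a HN k0 Ha.
have Hk : (2 / eps < k%:R)%R.
  apply: lt_le_trans (archi_boundP _) _; first by rewrite divr_ge0 // ltW.
  by rewrite ler_nat ltnW.
have k_pos : (0 < k%:R :> R)%R by rewrite ltr0n.
have pow_pos : (0 < (2 ^ k)%:R :> R)%R by rewrite ltr0n expn_gt0.
rewrite !ltr_pdivrMr // mulrAC.
rewrite ltr_pdivrMr // mulrC in Hk.
apply: lt_le_trans (_ : (2 * (2 ^ k)%:R <= _)%R); first by rewrite -natrM -expnS ltr_nat.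
by rewrite ler_pM2r // ltW.
Qed.

Theorem mainTheorem5 :
  (forall k : nat, 1 < k -> inC 1 k ->
     (forall a, is_a k a -> 2 ^ k - 1 < a < 2 ^ k.+1 - 1) /\
     (forall t j0 : nat, is_order2 k t -> j0 < t ->
        2 ^ k.+1 - 1 = 2 ^ j0 %[mod k] ->
        let s := (k - 1 - j0) %/ t in
        let j1 := j0 + s * t in
        is_a k (2 ^ k.+1 - 1 - 2 ^ j1)))
  /\
  (forall eps : rat, (0 < eps)%R ->
     exists N : nat, forall k a : nat, N <= k -> 1 < k -> inC 1 k -> is_a k a ->
       ((a%:R / k%:R) / (2 ^ k)%:R < eps)%R).
Proof.
split.
  move=> k Hk HC; split => [a|t j0 Ht Hj0 H0]; first exact: a_bounds.
  exact: a_formula.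
move=> eps eps0; have [N HN] := ratio_vanishes eps0.
exists N => k a HNk Hk HC Ha; apply: HN => //; first exact: ltnW.
have /andP [_ a_lt] := a_bounds Hk HC Ha.
exact: leq_trans a_lt (leq_subr 1 _).
Qed.
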